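(* Let $N\ge d$ and let $K\subset\mathbb{R}^d$ be a compact convex polytope of dimension $d$ with $N+1$ faces of codimension $1$, denoted $F_0,\dots,F_N$. Let $H_0,\dots,H_N$ be the hyperplanes with $F_j\subset H_j$, and let $n_0,\dots,n_N$ be corresponding normal vectors. Suppose every collection of $d$ vectors in $\{n_0,\dots,n_N\}$ is linearly independent. Then $K$ is an intersection of finitely many $d$-dimensional simplices, $$K=\bigcap_{j=1}^M S_j,\qquad M\le \binom{N+1}{d+1},$$ such that each (codimension-one) face of each $S_j$ contains a face of $K$.
   Context: A hyperplane $H=\{x\in\mathbb{R}^d\colon l(x)=0\}$ is the zero set of a nonconstant affine function $l(x)=n\cdot x+b$. The vector $n$ is a normal vector of $H$. *)

From HB Require Import structures.
From mathcomp Require Import all_boot all_order all_algebra.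
From mathcomp Require Import classical_sets reals.
Set Implicit Arguments. Unset Strict Implicit. Unset Printing Implicit Defensive.
Import Order.TTheory GRing.Theory Num.Theory.
Local Open Scope ring_scope.
Local Open Scope classical_set_scope.

Section Defs.
Variables (R : realType) (d : nat).
Notation vec := 'rV[R]_d.

Definition dotp (u v : vec) : R := \sum_(i < d) u 0 i * v 0 i.

Definition aff_indep (m : nat) (p : 'I_m -> vec) : Prop :=
  forall w : 'I_m -> R, \sum_(i < m) w i = 0 ->
    \sum_(i < m) w i *: p i = 0 -> forall i, w i = 0.

Definition conv_hull (m : nat) (p : 'I_m -> vec) : set vec :=
  [set x | exists w : 'I_m -> R, (forall i, 0 <= w i) /\
     \sum_(i < m) w i = 1 /\ x = \sum_(i < m) w i *: p i].

Definition polytope (K : set vec) : Prop :=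
  exists m (p : 'I_m -> vec), K = conv_hull p.

Definition full_dim (K : set vec) : Prop :=
  exists q : 'I_d.+1 -> vec, aff_indep q /\ forall i, K (q i).

Definition facet (K F : set vec) : Prop :=
  exists (n : vec) (b : R), n != 0 /\
    (forall x, K x -> dotp n x + b <= 0) /\
    F = [set x | K x /\ dotp n x + b = 0] /\
    exists p : 'I_d -> vec, aff_indep p /\ forall i, F (p i).

Definition simplex (S : set vec) : Prop :=
  exists v : 'I_d.+1 -> vec, aff_indep v /\ S = conv_hull v.

End Defs.

From HB Require Import structures.
From mathcomp Require Import all_boot all_order all_algebra.
From mathcomp Require Import classical_sets boolp reals ring lra zify.
Set Implicit Arguments. Unset Strict Implicit. Unset Printing Implicit Defensive.
Import Order.TTheory GRing.Theory Num.Theory.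
Local Open Scope ring_scope.
Local Open Scope classical_set_scope.

(* Orient every facet normal outwards.  Since K is bounded, Farkas' lemma puts
   -n_j in the cone of the other normals; by Caratheodory and general position
   n_j then lies in a set J of d + 1 normals admitting a positive linear
   dependency.  The d + 1 halfspaces indexed by such a J bound a simplex whose
   facets lie on facet hyperplanes of K.  Finally K is the intersection of its
   facet halfspaces (a point outside is separated by Farkas' lemma, and the
   separating hyperplane can be rotated onto a facet), hence of these at most
   C(N + 1, d + 1) simplices. *)

Section Dotp.
Variables (R : realType) (k : nat).
Implicit Types (u v w : 'rV[R]_k) (a : R).

Lemma dotpC u v : dotp u v = dotp v u.
Proof. by apply: eq_bigr => i _; rewrite mulrC. Qed.

Lemma dotpDr u v w : dotp u (v + w) = dotp u v + dotp u w.
Proof. by rewrite /dotp -big_split; apply: eq_bigr => i _; rewrite mxE mulrDr. Qed.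

Lemma dotpZr u v a : dotp u (a *: v) = a * dotp u v.
Proof. by rewrite /dotp mulr_sumr; apply: eq_bigr => i _; rewrite mxE mulrCA. Qed.

Lemma dotpNr u v : dotp u (- v) = - dotp u v.
Proof. by rewrite -scaleN1r dotpZr mulN1r. Qed.

Lemma dotpBr u v w : dotp u (v - w) = dotp u v - dotp u w.
Proof. by rewrite dotpDr dotpNr. Qed.

Lemma dotp0r u : dotp u 0 = 0.
Proof. by rewrite /dotp big1 // => i _; rewrite mxE mulr0. Qed.

Lemma dotp_sumr (I : finType) u (F : I -> 'rV[R]_k) :
  dotp u (\sum_i F i) = \sum_i dotp u (F i).
Proof.
rewrite /dotp exchange_big /=; apply: eq_bigr => c _.
by rewrite summxE mulr_sumr.
Qed.

Lemma dotpDl u v w : dotp (v + w) u = dotp v u + dotp w u.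
Proof. by rewrite !(dotpC _ u) dotpDr. Qed.

Lemma dotpZl u v a : dotp (a *: v) u = a * dotp v u.
Proof. by rewrite !(dotpC _ u) dotpZr. Qed.

Lemma dotpBl u v w : dotp (v - w) u = dotp v u - dotp w u.
Proof. by rewrite !(dotpC _ u) dotpBr. Qed.

Lemma dotp0l u : dotp 0 u = 0.
Proof. by rewrite dotpC dotp0r. Qed.

Lemma dotp_suml (I : finType) u (F : I -> 'rV[R]_k) :
  dotp (\sum_i F i) u = \sum_i dotp (F i) u.
Proof. by rewrite dotpC dotp_sumr; apply: eq_bigr => i _; rewrite dotpC. Qed.

Lemma dotpp_eq0 u : (dotp u u == 0) = (u == 0).
Proof.
apply/idP/eqP => [|->]; last by rewrite dotp0r.
rewrite psumr_eq0 => [/allP u0|i _]; last by rewrite -expr2 sqr_ge0.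
apply/rowP => i; have /implyP/(_ isT) := u0 i (mem_index_enum _).
by rewrite mulf_eq0 orbb mxE => /eqP.
Qed.

Lemma dotpp_gt0 u : u != 0 -> 0 < dotp u u.
Proof.
move=> u0; rewrite lt_def dotpp_eq0 u0.
by apply: sumr_ge0 => i _; rewrite -expr2 sqr_ge0.
Qed.

Lemma dotp_rowE n (A : 'M[R]_(n, k)) l u : dotp (row l A) u = (A *m u^T) l 0.
Proof. by rewrite mxE; apply: eq_bigr => i _; rewrite !mxE. Qed.

End Dotp.

Lemma sumr_le0_eq0 (R : numDomainType) (I : finType) (f : I -> R) :
  (forall i, f i <= 0) -> \sum_i f i = 0 -> forall i, f i = 0.
Proof.
move=> f_le0 f_sum i; apply/eqP; rewrite -oppr_eq0; apply/eqP.
apply: (@psumr_eq0P _ _ xpredT (fun i => - f i)) => // [j _|].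
  by rewrite oppr_ge0.
by rewrite sumrN f_sum oppr0.
Qed.

Section Convex.
Variables (R : realType) (d : nat).
Notation vec := 'rV[R]_d.

Lemma dotp_comb m (p : 'I_m -> vec) (w : 'I_m -> R) a c :
  dotp a (\sum_i w i *: p i) + c * \sum_i w i = \sum_i w i * (dotp a (p i) + c).
Proof.
rewrite dotp_sumr mulr_sumr -big_split.
by apply: eq_bigr => i _; rewrite dotpZr /=; ring.
Qed.

Lemma dotp_conv m (p : 'I_m -> vec) (w : 'I_m -> R) a c : \sum_i w i = 1 ->
  dotp a (\sum_i w i *: p i) + c = \sum_i w i * (dotp a (p i) + c).
Proof. by move=> w1; rewrite -dotp_comb w1 mulr1. Qed.

Lemma conv_hull_le m (p : 'I_m -> vec) a c z :
  (forall i, dotp a (p i) + c <= 0) -> conv_hull p z -> dotp a z + c <= 0.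
Proof.
move=> pc [w [w0 [w1 ->]]]; rewrite dotp_conv //.
by apply: sumr_le0 => i _; apply: mulr_ge0_le0.
Qed.

Lemma conv_hull_pt m (p : 'I_m -> vec) i : conv_hull p (p i).
Proof.
exists (fun j => if j == i then 1 else 0); split=> [j|]; first by case: ifP.
split; rewrite (bigD1 i) //= eqxx ?scale1r big1 ?addr0 //.
all: by move=> j /negbTE ->; rewrite ?scale0r.
Qed.

Lemma polytope_bounded (K : set vec) y :
  polytope K -> exists B, forall z, K z -> dotp y z <= B.
Proof.
move=> [m [p ->]]; exists (\sum_i `|dotp y (p i)|) => z.
rewrite -subr_le0; apply: conv_hull_le => i; rewrite subr_le0.
by apply: le_trans (ler_norm _) _; rewrite (bigD1 i) //= lerDl sumr_ge0.
Qed.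

End Convex.

Lemma row_freeN_kernel (F : fieldType) m n (A : 'M[F]_(m, n)) :
  ~~ row_free A -> exists2 u : 'rV_m, u != 0 & u *m A = 0.
Proof.
move=> /negP A_free; apply: contrapT => no_u; apply: A_free.
by apply/inj_row_free => u uA; apply: contrapT => /eqP u0; apply: no_u; exists u.
Qed.

Section Homogeneous.
Variables (R : realType) (d : nat).
Notation vec := 'rV[R]_d.

Definition hpoint (x : vec) : 'rV[R]_(d + 1) := row_mx x (const_mx 1).
Definition hform (a : vec) (c : R) : 'rV[R]_(d + 1) := row_mx a (const_mx c).

Lemma dotp_hform a c x : dotp (hform a c) (hpoint x) = dotp a x + c.
Proof.
rewrite /dotp big_split_ord big_ord1 /= !row_mxEr !mxE mulr1; congr (_ + _).
by apply: eq_bigr => i _; rewrite !row_mxEl.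
Qed.

Lemma hformE (z : 'rV[R]_(d + 1)) : z = hform (lsubmx z) (rsubmx z 0 0).
Proof.
rewrite /hform -[z in LHS]hsubmxK; congr row_mx.
by apply/rowP => i; rewrite !mxE !ord1.
Qed.

Lemma hform_eq0 a c : (hform a c == 0) = (a == 0) && (c == 0).
Proof.
rewrite /hform row_mx_eq0; congr (_ && _); apply/eqP/eqP => [/rowP/(_ ord0)|->].
  by rewrite !mxE.
by apply/rowP => i; rewrite !mxE.
Qed.

Lemma sum_hpoint m (w : 'I_m -> R) (p : 'I_m -> vec) :
  \sum_i w i *: hpoint (p i) = hform (\sum_i w i *: p i) (\sum_i w i).
Proof.
apply: (big_rec3 (fun s x c => s = hform x c)) => [|i s x c _ ->].
  by rewrite /hform -row_mx0; congr row_mx; apply/rowP => j; rewrite !mxE.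
rewrite /hpoint /hform scale_row_mx add_row_mx; congr row_mx.
by apply/rowP => j; rewrite !mxE mulr1.
Qed.

Lemma aff_indep_row_free m (p : 'I_m -> vec) :
  aff_indep p -> row_free (\matrix_l hpoint (p l)).
Proof.
move=> p_indep; apply/inj_row_free => u.
rewrite mulmx_sum_row; under eq_bigr do rewrite rowK.
rewrite sum_hpoint => /eqP; rewrite hform_eq0 => /andP[/eqP pu0 /eqP u0].
by apply/rowP => i; rewrite mxE (p_indep _ u0 pu0).
Qed.

Lemma hform_rank m r (p : 'I_m -> vec) (U : 'M[R]_(r, d + 1)) :
  aff_indep p -> (forall i l, dotp (row i U) (hpoint (p l)) = 0) ->
  (\rank U + m <= d + 1)%N.
Proof.
move=> /aff_indep_row_free /eqP p_rank Up.
have PU : (\matrix_l hpoint (p l)) *m U^T = 0.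
  apply/matrixP => l i; rewrite !mxE -[RHS](Up i l).
  by apply: eq_bigr => c _; rewrite !mxE mulrC.
by have := mulmx0_rank_max PU; rewrite mxrank_tr p_rank addnC.
Qed.

Lemma aff_indep_form_eq0 (q : 'I_d.+1 -> vec) a c :
  aff_indep q -> (forall i, dotp a (q i) + c = 0) -> a = 0.
Proof.
move=> q_indep qac.
have : (\rank (hform a c) + d.+1 <= d + 1)%N.
  apply: hform_rank q_indep _ => i l.
  by rewrite row_id dotp_hform qac.
move=> rank_le; have rank0 : \rank (hform a c) = 0%N by lia.
by move/eqP: rank0; rewrite mxrank_eq0 hform_eq0 => /andP[/eqP].
Qed.

Lemma aff_indep_forms_dep (g : 'I_d -> vec) (H1 H2 : 'rV[R]_(d + 1)) :
  aff_indep g -> (forall l, dotp H1 (hpoint (g l)) = 0) ->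
  (forall l, dotp H2 (hpoint (g l)) = 0) ->
  exists al1 al2 : R, ((al1 != 0) || (al2 != 0)) /\ al1 *: H1 + al2 *: H2 = 0.
Proof.
move=> g_indep gH1 gH2.
pose U : 'M_(2, d + 1) := \matrix_(i < 2) (if i == 0 then H1 else H2).
have UE (u : 'rV_2) : u *m U = u 0 0 *: H1 + u 0 1 *: H2.
  rewrite mulmx_sum_row big_ord_recl big_ord1 !rowK /=.
  by congr (_ + u 0 _ *: _); apply: val_inj.
have U_rank : (\rank U + d <= d + 1)%N.
  by apply: hform_rank g_indep _ => i l; rewrite rowK; case: ifP.
have [u u0 uU] : exists2 u : 'rV_2, u != 0 & u *m U = 0.
  by apply: row_freeN_kernel; apply/negP => /eqP; lia.
exists (u 0 0), (u 0 1); split; last by rewrite -UE.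
apply: contraNT u0; rewrite negb_or !negbK => /andP[/eqP u00 /eqP u01].
apply/eqP/rowP => i; rewrite mxE.
by case: i => -[|[|//]] ?; [rewrite -u00 | rewrite -u01]; congr (u _ _); apply: val_inj.
Qed.

Lemma aff_indep_forms_prop (g : 'I_d -> vec) a1 c1 a2 c2 :
  aff_indep g -> a1 != 0 -> a2 != 0 ->
  (forall l, dotp a1 (g l) + c1 = 0) -> (forall l, dotp a2 (g l) + c2 = 0) ->
  exists2 c, c != 0 & forall x, dotp a2 x + c2 = c * (dotp a1 x + c1).
Proof.
move=> g_indep a1_0 a2_0 g1 g2.
have [H1_0 H2_0] : hform a1 c1 != 0 /\ hform a2 c2 != 0.
  by rewrite !hform_eq0 (negbTE a1_0) (negbTE a2_0).
have [al1 [al2 [al_0 alH]]] := aff_indep_forms_dep g_indep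
  (fun l => etrans (dotp_hform _ _ _) (g1 l)) (fun l => etrans (dotp_hform _ _ _) (g2 l)).
have al2_0 : al2 != 0.
  apply/eqP => al2_0; move: al_0 alH; rewrite al2_0 eqxx orbF scale0r addr0.
  by move=> al1_0 /eqP; rewrite scaler_eq0 (negbTE al1_0) (negbTE H1_0).
have al1_0 : al1 != 0.
  apply/eqP => al1_0; move: alH; rewrite al1_0 scale0r add0r => /eqP.
  by rewrite scaler_eq0 (negbTE al2_0) (negbTE H2_0).
exists (- al1 / al2) => [|x]; first by rewrite mulf_neq0 ?oppr_eq0 ?invr_eq0.
have /eqP := congr1 (fun H => dotp H (hpoint x)) alH.
rewrite dotp0l dotpDl !dotpZl !dotp_hform addrC addr_eq0 => /eqP E.
by apply: (mulfI al2_0); rewrite E; field.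
Qed.

Lemma full_dim_form_eq0 (K : set vec) a c :
  full_dim K -> (forall z, K z -> dotp a z + c = 0) -> a = 0.
Proof.
by move=> [q [q_indep Kq]] Kac; apply: (aff_indep_form_eq0 q_indep) => i; apply/Kac.
Qed.

Lemma exists_form_vanishing r (q : 'I_r -> vec) : (r <= d)%N ->
  exists a c, ((a != 0) || (c != 0)) /\ forall l, dotp a (q l) + c = 0.
Proof.
move=> rd; pose E := \matrix_l hpoint (q l).
have [z z0 zE] : exists2 z : 'rV_(d + 1), z != 0 & z *m E^T = 0.
  apply: row_freeN_kernel; rewrite /row_free mxrank_tr.
  by apply/negP => /eqP rankE; have := rank_leq_row E; lia.
exists (lsubmx z), (rsubmx z 0 0); split; first by rewrite -negb_and -hform_eq0 -hformE.
move=> l; rewrite -dotp_hform -hformE dotpC.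
have /rowP/(_ l) := zE; rewrite !mxE => <-.
by apply: eq_bigr => i _; rewrite !mxE mulrC.
Qed.

End Homogeneous.

Lemma sum_codom (V : nmodType) (T : finType) c (s : 'I_c -> T) (F : T -> V) :
  injective s -> (forall i, i \notin codom s -> F i = 0) ->
  \sum_i F i = \sum_l F (s l).
Proof.
move=> s_inj F0; rewrite (bigID (mem (codom s))) /= [X in _ + X]big1 ?addr0.
  by rewrite -big_uniq ?big_image // (map_inj_uniq s_inj) enum_uniq.
by move=> i /F0.
Qed.

Lemma enum_ord (T : finType) (J : {pred T}) c :
  #|J| = c -> exists2 s : 'I_c -> T, injective s & J =i codom s.
Proof.
move=> Jc; exists (fun l => enum_val (cast_ord (esym Jc) l)).
  by move=> l1 l2 /enum_val_inj /cast_ord_inj.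
move=> i; apply/idP/codomP => [iJ|[l ->]]; last exact: enum_valP.
by exists (cast_ord Jc (enum_rank_in iJ i)); rewrite cast_ordK enum_rankK_in.
Qed.

Lemma exists_superset (T : finType) (U : {set T}) c :
  (#|U| <= c <= #|T|)%N -> exists2 V : {set T}, U \subset V & #|V| = c.
Proof.
elim: c => [|c IH] /andP[Uc cT].
  by exists U => //; apply/eqP; rewrite -leqn0.
have [Uc1|Unc] := eqVneq #|U| c.+1; first by exists U.
have [V UV Vc] : exists2 V : {set T}, U \subset V & #|V| = c.
  by apply: IH; rewrite (ltnW cT) andbT -ltnS ltn_neqAle Unc Uc.
have [x xV] : exists x, x \notin V.
  apply: contrapT => allV; have : [set: T]%SET \subset V.
    apply/fintype.subsetP => x _; apply: contrapT => xV.
    by apply: allV; exists x; apply/negP.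
  by move/subset_leq_card; rewrite cardsT; lia.
exists (x |: V); first by rewrite (fintype.subset_trans UV) ?subsetU1.
by rewrite cardsU1 xV Vc.
Qed.

Lemma ratio_test (R : realFieldType) (T : finType) (f g : T -> R) i0 :
  (forall i, 0 <= f i) -> 0 < g i0 ->
  exists t, [/\ 0 <= t, forall i, t * g i <= f i & exists2 i, 0 < g i & f i = t * g i].
Proof.
move=> f0 gi0.
have [i gi imin] := @arg_minP _ _ _ i0 (fun i => 0 < g i) (fun i => f i / g i) gi0.
exists (f i / g i); split.
- by apply: divr_ge0 => //; apply: ltW.
- move=> j; have [gj|gj] := ltrP 0 (g j); first by rewrite -ler_pdivlMr // imin.
  by apply: le_trans (f0 j); apply: mulr_ge0_le0 => //; apply: divr_ge0 => //; apply: ltW.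
- by exists i => //; rewrite divfK ?gt_eqF.
Qed.

Section Cones.
Variables (R : realType) (k : nat).
Notation vec := 'rV[R]_k.

Definition cone (T : finType) (a : T -> vec) : set vec :=
  [set b | exists2 mu : T -> R, (forall i, 0 <= mu i) & b = \sum_i mu i *: a i].

Lemma cone_cons m (a : 'I_m.+1 -> vec) c v :
  0 <= c -> cone (fun i => a (lift ord0 i)) v -> cone a (c *: a ord0 + v).
Proof.
move=> c0 [mu mu0 ->].
exists (fun i => if unlift ord0 i is Some j then mu j else c).
  by move=> i; case: unlift.
rewrite big_ord_recl unlift_none; congr (_ + _).
by apply: eq_bigr => i _; rewrite liftK.
Qed.

Lemma farkas m (a : 'I_m -> vec) b :
  ~ cone a b -> exists y, (forall i, dotp y (a i) <= 0) /\ 0 < dotp y b.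
Proof.
elim: m a b => [|m IH] a b b_cone.
  exists b; split=> [[]//|]; apply: dotpp_gt0; apply: contra_notN b_cone => /eqP->.
  by exists (fun=> 0); rewrite // big_ord0.
pose a0 := a ord0; pose A i := a (lift ord0 i).
have [y [yA yb]] : exists y, (forall i, dotp y (A i) <= 0) /\ 0 < dotp y b.
  apply: IH => bA; apply: b_cone.
  by rewrite -[b]add0r -(scale0r (a ord0)); apply: cone_cons.
have [ya0|ya0] := lerP (dotp y a0) 0.
  by exists y; split => // i; case: (unliftP ord0 i) => [j|] ->; [exact: yA | exact: ya0].
set t := dotp y a0 in ya0; pose pr v := v - (dotp y v / t) *: a0.
have [y' [y'A y'b]] :
    exists y', (forall i, dotp y' (pr (A i)) <= 0) /\ 0 < dotp y' (pr b).
  apply: IH => -[mu mu0 prb]; apply: b_cone.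
  have -> : b = (dotp y b / t - \sum_i mu i * (dotp y (A i) / t)) *: a0
                + \sum_i mu i *: A i.
    rewrite scalerBl scaler_suml -{1}(subrK ((dotp y b / t) *: a0) b) -/(pr b) prb.
    under eq_bigr do rewrite scalerBr scalerA.
    by rewrite sumrB addrC addrA addrAC.
  apply: cone_cons; last by exists mu.
  rewrite subr_ge0 (@le_trans _ _ 0) //.
    apply: sumr_le0 => i _; apply: mulr_ge0_le0 => //.
    by apply: mulr_le0_ge0 => //; rewrite invr_ge0 ltW.
  by apply: divr_ge0; apply: ltW.
pose y'' := y' - (dotp y' a0 / t) *: y.
have y''E v : dotp y'' v = dotp y' (pr v).
  by rewrite /pr dotpBl dotpZl dotpBr dotpZr; ring.
exists y''; split; last by rewrite y''E.
move=> i; rewrite y''E; case: (unliftP ord0 i) => [j|] ->; first exact: y'A.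
by rewrite /pr -/a0 -/t divff ?gt_eqF // scale1r subrr dotp0r.
Qed.

Definition free_on (T : finType) (v : T -> vec) (U : {pred T}) : Prop :=
  forall w : T -> R, (forall i, i \notin U -> w i = 0) ->
    \sum_i w i *: v i = 0 -> forall i, w i = 0.

Lemma free_on_card (T : finType) (v : T -> vec) (U : {pred T}) :
  free_on v U -> (#|U| <= k)%N.
Proof.
move=> U_free; pose s := @enum_val T (mem U).
suff /eqP <- : row_free (\matrix_(l < #|U|) v (s l)) by exact: rank_leq_col.
apply/inj_row_free => u; rewrite mulmx_sum_row; under eq_bigr do rewrite rowK.
pose w i := \sum_(l | s l == i) u 0 l.
have wE l : w (s l) = u 0 l.
  by rewrite /w (big_pred1 l) // => l'; rewrite /= (inj_eq enum_val_inj).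
have w_out i : i \notin U -> w i = 0.
  move=> iU; rewrite /w big_pred0 // => l.
  by apply: contraNF iU => /eqP <-; apply: enum_valP.
move=> uv; apply/rowP => l; rewrite mxE -wE; apply: U_free w_out _ _.
rewrite -[RHS]uv /w (eq_bigr (fun i => \sum_(l | s l == i) u 0 l *: v i)); last first.
  by move=> i _; rewrite scaler_suml.
rewrite (exchange_big_dep xpredT) //=; apply: eq_bigr => j _.
by rewrite (big_pred1 (s j)) // => i; rewrite /= eq_sym.
Qed.

Lemma not_free_on_pos (T : finType) (v : T -> vec) (U : {pred T}) :
  ~ free_on v U -> exists w : T -> R, [/\ forall i, i \notin U -> w i = 0,
    \sum_i w i *: v i = 0 & exists i, 0 < w i].
Proof.
move=> U_dep; apply: contrapT => no_w; apply: U_dep => w w_out wv i.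
have [wi|wi|//] := ltrgtP (w i) 0; case: no_w; last by exists w; split=> //; exists i.
exists (fun j => - w j); split; last by exists i; rewrite oppr_gt0.
  by move=> j /w_out->; rewrite oppr0.
by under eq_bigr do rewrite scaleNr; rewrite sumrN wv oppr0.
Qed.

Lemma free_onS (T : finType) (v : T -> vec) (U V : {pred T}) :
  {subset U <= V} -> free_on v V -> free_on v U.
Proof. by move=> UV V_free w w_out; apply: V_free => i /(contra (UV i)) /w_out. Qed.

Lemma row_free_free_on (T : finType) c (v : T -> vec) (s : 'I_c -> T) (U : {pred T}) :
  injective s -> U =i codom s -> row_free (\matrix_l v (s l)) -> free_on v U.
Proof.
move=> s_inj Us s_free w w_out.
rewrite (sum_codom s_inj) => [wv i|i]; last by rewrite -Us => /w_out->; rewrite scale0r.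
have /rowP ws0 : \row_l w (s l) = 0.
  apply/eqP; rewrite -(mulmx_free_eq0 _ s_free) mulmx_sum_row; apply/eqP.
  by rewrite -[RHS]wv; apply: eq_bigr => l _; rewrite rowK mxE.
have [|/w_out //] := boolP (i \in U).
by rewrite Us => /codomP[l ->]; have := ws0 l; rewrite !mxE.
Qed.

Lemma caratheodory (T : finType) (a : T -> vec) b : cone a b ->
  exists mu : T -> R, [/\ forall i, 0 <= mu i, b = \sum_i mu i *: a i
    & (#|[set i | mu i != 0%R]%SET| <= k)%N].
Proof.
move=> [mu + ->]; move: {2}#|_| (leqnn #|[set i | mu i != 0]%SET|) => n.
elim: n mu => [|n IH] mu supp mu0.
  by exists mu; split=> //; apply: leq_trans supp _.
have [Sk|kS] := leqP #|[set i | mu i != 0]%SET| k; first by exists mu.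
have S_dep : ~ free_on a [set i | mu i != 0]%SET by move/free_on_card; rewrite leqNgt kS.
have [w [w_out wa [i0 wi0]]] := not_free_on_pos S_dep.
have [t [t0 tw [i1 wi1 mui1]]] := ratio_test mu0 wi0.
have mu_w i : mu i = 0 -> w i = 0 by move=> mui; apply: w_out; rewrite inE mui eqxx.
have [lam [lam0 lamE lam_supp]] : exists lam : T -> R, [/\ forall i, 0 <= lam i,
    \sum_i (mu i - t * w i) *: a i = \sum_i lam i *: a i
    & (#|[set i | lam i != 0%R]%SET| <= k)%N].
  apply: IH => [|i]; last by rewrite subr_ge0.
  rewrite -ltnS; apply: leq_trans supp; apply: proper_card; apply/properP; split.
    apply/fintype.subsetP => i; rewrite !inE; apply: contra => /eqP mui.
    by rewrite mui (mu_w _ mui) mulr0 subr0.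
  exists i1; rewrite !inE ?mui1 ?subrr ?eqxx // mulf_neq0 ?gt_eqF //.
  rewrite lt_def t0 andbT; apply: contraTneq wi1 => t_0.
  by rewrite (mu_w i1) ?ltxx // mui1 t_0 mul0r.
exists lam; split=> //; rewrite -lamE.
under [RHS]eq_bigr do rewrite scalerBl -scalerA.
by rewrite sumrB -scaler_sumr wa scaler0 subr0.
Qed.

End Cones.

Section SupportingHyperplane.
Variables (R : realType) (d m : nat) (p : 'I_m -> 'rV[R]_d).
Hypothesis p_spans : forall a c, (forall i, dotp a (p i) + c = 0) -> a = 0.

Lemma aff_indep_cons r (q : 'I_r.+1 -> 'rV[R]_d) u g :
  aff_indep (fun l => q (lift ord0 l)) ->
  (forall l, dotp u (q (lift ord0 l)) + g = 0) -> dotp u (q ord0) + g != 0 ->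
  aff_indep q.
Proof.
move=> q_indep qug zug w w1 wq.
have w0 : w ord0 = 0.
  have := dotp_comb q w u g; rewrite w1 wq dotp0r mulr0 addr0 big_ord_recl.
  rewrite big1 => [|l _]; last by rewrite qug mulr0.
  by rewrite addr0 => /esym/eqP; rewrite mulf_eq0 (negbTE zug) orbF => /eqP.
have wl : forall l, w (lift ord0 l) = 0.
  apply: q_indep; first by move: w1; rewrite big_ord_recl w0 add0r.
  by move: wq; rewrite big_ord_recl w0 scale0r add0r.
by move=> k; case: (unliftP ord0 k) => [l|] ->.
Qed.

Definition separating_through x r a c (s : 'I_r -> 'I_m) :=
  [/\ forall i, dotp a (p i) + c <= 0, 0 < dotp a x + c,
      aff_indep (fun l => p (s l)) & forall l, dotp a (p (s l)) + c = 0].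

(* Rotate the hyperplane about [x] and the vertices already on it until it
   meets one more vertex. *)
Lemma support_step x r a c (s : 'I_r -> 'I_m) : (r < d)%N ->
  separating_through x a c s ->
  exists a' c' (s' : 'I_r.+1 -> 'I_m), separating_through x a' c' s'.
Proof.
move=> rd [pac xac s_indep sac].
pose q k := if unlift ord0 k is Some l then p (s l) else x.
have [u [g [ug0 qug]]] := exists_form_vanishing q rd.
have [xug sug] : dotp u x + g = 0 /\ forall l, dotp u (p (s l)) + g = 0.
  split=> [|l]; [have := qug ord0 | have := qug (lift ord0 l)];
    by rewrite /q ?liftK ?unlift_none.
have [i1 ui1] : exists i, dotp u (p i) + g != 0.
  apply: contrapT => no_i; move: ug0 xug.
  have -> : u = 0.
    by apply: (p_spans (c := g)) => i; apply: contrapT => /eqP ?; apply: no_i; exists i.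
  by rewrite eqxx dotp0l add0r /= => /eqP.
pose sg := if 0 < dotp u (p i1) + g then 1 else -1 : R.
pose sl i := sg * (dotp u (p i) + g).
have sli1 : 0 < sl i1.
  rewrite /sl /sg; case: ifP => [|/negbT]; first by rewrite mul1r.
  by rewrite mulN1r oppr_gt0 -leNgt le_eqVlt (negbTE ui1).
have pac_opp i : 0 <= - (dotp a (p i) + c) by rewrite oppr_ge0.
have [t [t0 tsl [ib slib tib]]] := ratio_test pac_opp sli1.
have new_form y : dotp (a + (t * sg) *: u) y + (c + t * sg * g)
                  = dotp a y + c + t * (sg * (dotp u y + g)).
  by rewrite dotpDl dotpZl; ring.
pose s' k := if unlift ord0 k is Some l then s l else ib.
have s'E : (fun l => p (s' (lift ord0 l))) = (fun l => p (s l)).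
  by apply: funext => l; rewrite /s' liftK.
exists (a + (t * sg) *: u), (c + t * sg * g), s'; split.
- by move=> i; have := tsl i; rewrite new_form /sl; lra.
- by rewrite new_form xug !mulr0 addr0.
- apply: (aff_indep_cons (u := sg *: u) (g := sg * g)); first by rewrite s'E.
    by move=> l; rewrite /s' liftK dotpZl -mulrDr sug mulr0.
  by rewrite /s' unlift_none dotpZl -mulrDr gt_eqF.
- move=> k; rewrite /s'; case: (unliftP ord0 k) => [l|] _; rewrite new_form.
    by rewrite sac sug !mulr0 addr0.
  by rewrite -/(sl ib) -tib addrN.
Qed.

Lemma supporting_hyperplane x a c :
  (forall i, dotp a (p i) + c <= 0) -> 0 < dotp a x + c ->
  exists a' c' (s : 'I_d -> 'I_m), separating_through x a' c' s.
Proof.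
move=> pac xac; suff /(_ d (leqnn d)) : forall r, (r <= d)%N ->
  exists a' c' (s : 'I_r -> 'I_m), separating_through x a' c' s by [].
elim=> [_|r IH rd].
  have s0 : 'I_0 -> 'I_m by case.
  by exists a, c, s0; split=> // [w _ _|] [].
have [a1 [c1 [s sep]]] := IH (ltnW rd).
exact: support_step rd sep.
Qed.

End SupportingHyperplane.

Definition halfspaces (R : realType) d m (a : 'I_m -> 'rV[R]_d) (c : 'I_m -> R) :
  set 'rV[R]_d := [set x | forall k, dotp (a k) x + c k <= 0].

Section SimplexOfForms.
Variables (R : realType) (d : nat) (a : 'I_d.+1 -> 'rV[R]_d) (c lam : 'I_d.+1 -> R).
Hypothesis lam_gt0 : forall k, 0 < lam k.
Hypothesis lam_a : \sum_k lam k *: a k = 0.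
Hypothesis lam_c : \sum_k lam k * c k < 0.
Hypothesis a_free : forall k, row_free (\matrix_l a (lift k l)).

Local Notation L k x := (dotp (a k) x + c k).
Local Notation C := (\sum_k lam k * c k).

Lemma sum_lam_form x : \sum_k lam k * L k x = C.
Proof.
transitivity (dotp (\sum_k lam k *: a k) x + C); last by rewrite lam_a dotp0l add0r.
by rewrite dotp_suml -big_split; apply: eq_bigr => k _; rewrite dotpZl mulrDr.
Qed.

Lemma dotp_lift_eq0 k z : (forall l, dotp (a (lift k l)) z = 0) -> z = 0.
Proof.
move=> az; have A_unit := a_free k; rewrite row_free_unit in A_unit.
apply: trmx_inj; rewrite trmx0 -[z^T](mulKmx A_unit).
have -> : \matrix_l a (lift k l) *m z^T = 0.
  by apply/matrixP => l i; rewrite ord1 -dotp_rowE rowK az mxE.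
by rewrite mulmx0.
Qed.

Definition vertex k : 'rV[R]_d :=
  (invmx (\matrix_l a (lift k l)) *m \col_l (- c (lift k l)))^T.

Lemma form_vertex k k' : k' != k -> L k' (vertex k) = 0.
Proof.
case: (unliftP k k') => [l ->|->]; last by rewrite eqxx.
have A_unit := a_free k; rewrite row_free_unit in A_unit.
by rewrite -(rowK (fun l => a (lift k l)) l) dotp_rowE trmxK mulKVmx // mxE addNr.
Qed.

Lemma form_vertex_self k : L k (vertex k) = C / lam k.
Proof.
rewrite -(sum_lam_form (vertex k)) (bigD1 k) //= big1 ?addr0 => [|k' k'k].
  by rewrite mulrC mulKf // gt_eqF.
by rewrite form_vertex ?mulr0.
Qed.

Lemma form_vertex_self_lt0 k : L k (vertex k) < 0.
Proof. by rewrite form_vertex_self pmulr_llt0 ?invr_gt0. Qed.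

Lemma form_comb k (w : 'I_d.+1 -> R) :
  \sum_k w k = 1 -> L k (\sum_k' w k' *: vertex k') = w k * L k (vertex k).
Proof.
move=> w1; rewrite dotp_conv // (bigD1 k) //= big1 ?addr0 // => k' k'k.
by rewrite form_vertex ?mulr0 // eq_sym.
Qed.

Definition bary k x := lam k * L k x / C.

Lemma sum_bary x : \sum_k bary k x = 1.
Proof. by rewrite -mulr_suml sum_lam_form divff // lt_eqF. Qed.

Lemma vertex_decomp x : x = \sum_k bary k x *: vertex k.
Proof.
apply/eqP; rewrite -subr_eq0; apply/eqP.
apply: (@dotp_lift_eq0 ord0) => l.
rewrite dotpBr; apply/eqP; rewrite subr_eq0; apply/eqP/(addIr (c (lift ord0 l))).
rewrite form_comb ?sum_bary // form_vertex_self /bary.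
by field; rewrite gt_eqF ?lt_eqF.
Qed.

Lemma bary_ge0 x k : halfspaces a c x -> 0 <= bary k x.
Proof.
move=> Sx; apply: mulr_le0; first exact: mulr_ge0_le0 (ltW (lam_gt0 k)) (Sx k).
by rewrite ltW // invr_lt0.
Qed.

Lemma form_bary f g x : dotp f x + g = \sum_k bary k x * (dotp f (vertex k) + g).
Proof. by rewrite {1}(vertex_decomp x) dotp_conv // sum_bary. Qed.

Lemma halfspaces_conv : halfspaces a c = conv_hull vertex.
Proof.
apply/seteqP; split=> x.
  move=> Sx; exists (bary^~ x); split=> [k|]; first exact: bary_ge0.
  by split; [exact: sum_bary | exact: vertex_decomp].
move=> [w [w0 [w1 ->]]] k; rewrite form_comb //.
exact: mulr_ge0_le0 (w0 k) (ltW (form_vertex_self_lt0 k)).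
Qed.

Lemma aff_indep_vertex : aff_indep vertex.
Proof.
move=> w w1 wv k; have := dotp_comb vertex w (a k) (c k).
rewrite w1 wv dotp0r mulr0 addr0 (bigD1 k) //= big1 ?addr0 => [|k' k'k].
  by move/esym/eqP; rewrite mulf_eq0 (lt_eqF (form_vertex_self_lt0 k)) orbF => /eqP.
by rewrite form_vertex ?mulr0 // eq_sym.
Qed.

Lemma simplex_halfspaces : simplex (halfspaces a c).
Proof. by exists vertex; split; [exact: aff_indep_vertex | exact: halfspaces_conv]. Qed.

(* Each vertex lies off exactly one of the hyperplanes [L k = 0]. *)
Lemma aff_indep_on_two_forms k1 k2 (g : 'I_d -> 'rV[R]_d) : k1 != k2 -> aff_indep g ->
  (forall l, L k1 (g l) = 0) -> (forall l, L k2 (g l) = 0) -> False.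
Proof.
move=> k12 g_indep g1 g2.
have [al1 [al2 [al0 alH]]] := aff_indep_forms_dep g_indep
  (fun l => etrans (dotp_hform _ _ _) (g1 l)) (fun l => etrans (dotp_hform _ _ _) (g2 l)).
have al_vertex k : al1 * L k1 (vertex k) + al2 * L k2 (vertex k) = 0.
  have := congr1 (fun H => dotp H (hpoint (vertex k))) alH.
  by rewrite dotpDl !dotpZl !dotp_hform dotp0l.
have L_self k : L k (vertex k) != 0 by rewrite lt_eqF ?form_vertex_self_lt0.
move: al0 (al_vertex k1) (al_vertex k2).
rewrite (form_vertex k12) (@form_vertex k1 k2); last by rewrite eq_sym.
rewrite !mulr0 addr0 add0r => al0 /eqP E1 /eqP E2.
by case/orP: al0 => al; [move: E1 | move: E2];
  rewrite mulf_eq0 (negbTE al) (negbTE (L_self _)).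
Qed.

Lemma halfspaces_facet G : facet (halfspaces a c) G ->
  exists k, [set x | halfspaces a c x /\ L k x = 0] `<=` G.
Proof.
move=> [f [g [f0 [Sfg [-> [q [q_indep Gq]]]]]]].
pose e k := dotp f (vertex k) + g.
have e_le0 k : e k <= 0 by apply: Sfg; rewrite halfspaces_conv; apply: conv_hull_pt.
have e_eq0 k : ~ e k < 0 -> e k = 0.
  by move=> ek; apply/eqP; rewrite eq_le e_le0 leNgt; apply/negP.
have [k1 ek1] : exists k, e k < 0.
  apply: contrapT => no_k; move/eqP: f0; apply.
  apply: (aff_indep_form_eq0 aff_indep_vertex (c := g)) => k.
  by apply: e_eq0 => ek; apply: no_k; exists k.
have on_form k l : e k < 0 -> L k (q l) = 0.
  move=> ek; have [Sq fq] := Gq l.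
  have terms : \sum_k' bary k' (q l) * e k' = 0 by rewrite -form_bary.
  have := sumr_le0_eq0 (fun k' => mulr_ge0_le0 (bary_ge0 k' Sq) (e_le0 k')) terms k.
  move=> /eqP; rewrite mulf_eq0 (lt_eqF ek) orbF /bary !mulf_eq0 invr_eq0.
  by rewrite (lt_eqF lam_c) (gt_eqF (lam_gt0 k)) /= orbF => /eqP.
exists k1 => x [Sx Lx]; split=> //.
rewrite form_bary (bigD1 k1) //= big1 ?addr0 => [|k kk1].
  by rewrite /bary Lx mulr0 !mul0r.
rewrite -/(e k) e_eq0 ?mulr0 // => ek.
exact: aff_indep_on_two_forms kk1 q_indep (on_form k ^~ ek) (on_form k1 ^~ ek1).
Qed.

End SimplexOfForms.

Section FacetNormals.
Variables (R : realType) (d N : nat) (K : set 'rV[R]_d)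
  (F : 'I_N.+1 -> set 'rV[R]_d) (n : 'I_N.+1 -> 'rV[R]_d) (b : 'I_N.+1 -> R).
Hypothesis polyK : polytope K.
Hypothesis fdK : full_dim K.
Hypothesis facF : forall j, facet K (F j).
Hypothesis allF : forall G, facet K G -> exists j, G = F j.
Hypothesis n0 : forall j, n j != 0.
Hypothesis Fn : forall j, F j `<=` [set x | dotp (n j) x + b j = 0].
Hypothesis gp : forall s : 'I_d -> 'I_N.+1, injective s ->
  row_free (\matrix_(k < d, i < d) n (s k) 0 i).

Definition orient j : R :=
  if `[< forall z, K z -> dotp (n j) z + b j <= 0 >] then 1 else -1.
Definition nout j := orient j *: n j.
Definition bout j := orient j * b j.

Lemma orient_neq0 j : orient j != 0.
Proof. by rewrite /orient; case: asboolP; rewrite ?oppr_eq0 oner_eq0. Qed.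

Lemma nout_neq0 j : nout j != 0.
Proof. by rewrite scaler_eq0 negb_or orient_neq0 n0. Qed.

Lemma out_formE j x : dotp (nout j) x + bout j = orient j * (dotp (n j) x + b j).
Proof. by rewrite dotpZl mulrDr. Qed.

Lemma facet_sub j : F j `<=` K.
Proof. by have [a [c [_ [_ [-> _]]]]] := facF j => x []. Qed.

Lemma out_form_le0 j z : K z -> dotp (nout j) z + bout j <= 0.
Proof.
rewrite out_formE /orient; case: asboolP => [valid Kz|invalid Kz].
  by rewrite mul1r valid.
have [a [c [a0 [Kac [Fj [g [g_indep Fg]]]]]]] := facF j.
have gac l : dotp a (g l) + c = 0 by move: (Fg l); rewrite Fj => -[].
have [e e0 nE] := aff_indep_forms_prop g_indep a0 (n0 j) gac (fun l => Fn (Fg l)).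
have e_lt0 : e < 0.
  rewrite lt_neqAle e0 /= leNgt; apply: contra_notN invalid => e_gt0 y Ky.
  by rewrite nE pmulr_rle0 // Kac.
by rewrite mulN1r nE oppr_le0 nmulr_rge0 // Kac.
Qed.

Lemma facet_out_form j a c (g : 'I_d -> 'rV[R]_d) :
  a != 0 -> (forall z, K z -> dotp a z + c <= 0) -> aff_indep g ->
  (forall l, F j (g l)) -> (forall l, dotp a (g l) + c = 0) ->
  exists2 e, 0 < e & forall x, dotp (nout j) x + bout j = e * (dotp a x + c).
Proof.
move=> a0 Kac g_indep Fg gac.
have gout l : dotp (nout j) (g l) + bout j = 0 by rewrite out_formE (Fn (Fg l)) mulr0.
have [e e0 nE] := aff_indep_forms_prop g_indep a0 (nout_neq0 j) gac gout.
exists e => //; have [z Kz zac] : exists2 z, K z & dotp a z + c < 0.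
  apply: contrapT => no_z; move/eqP: a0; apply.
  apply: (full_dim_form_eq0 (c := c) fdK) => z Kz; apply/eqP.
  by rewrite eq_le Kac //= leNgt; apply/negP => ?; apply: no_z; exists z.
by have := out_form_le0 j Kz; rewrite nE nmulr_lle0 // lt_def e0.
Qed.

Lemma vertices_span m (p : 'I_m -> 'rV[R]_d) : K = conv_hull p ->
  forall a c, (forall i, dotp a (p i) + c = 0) -> a = 0.
Proof.
move=> Kp a c pac; apply: (full_dim_form_eq0 (c := c) fdK) => z.
by rewrite Kp => -[w [_ [w1 ->]]]; rewrite dotp_conv // big1 // => i _; rewrite pac mulr0.
Qed.

Lemma out_form_gt0 x : ~ K x -> exists j, 0 < dotp (nout j) x + bout j.
Proof.
move=> Kx; have [m [p Kp]] := polyK.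
have [y [yp yx]] :
    exists y, (forall i, dotp y (hpoint (p i)) <= 0) /\ 0 < dotp y (hpoint x).
  apply: farkas => -[mu mu0]; rewrite sum_hpoint => /eq_row_mx[xE /rowP/(_ ord0)].
  by rewrite !mxE => mu1; apply: Kx; rewrite Kp xE; exists mu.
rewrite [y]hformE in yp yx; set a := lsubmx y in yp yx; set c := rsubmx y 0 0 in yp yx.
have pac i : dotp a (p i) + c <= 0 by rewrite -dotp_hform.
have xac : 0 < dotp a x + c by rewrite -dotp_hform.
have [a' [c' [s [pac' xac' s_indep sac']]]] :=
  supporting_hyperplane (vertices_span Kp) pac xac.
have Kac' z : K z -> dotp a' z + c' <= 0 by rewrite Kp; apply: conv_hull_le.
have a'0 : a' != 0.
  apply/eqP => a'0; have [q [_ Kq]] := fdK; have := Kac' _ (Kq ord0); move: xac'.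
  by rewrite a'0 !dotp0l !add0r => /lt_le_trans/[apply]; rewrite ltxx.
have Kps l : K (p (s l)) by rewrite Kp; apply: conv_hull_pt.
have [j GF] : exists j, [set z | K z /\ dotp a' z + c' = 0] = F j.
  apply: allF; exists a', c'; do 3!split=> //.
  by exists (fun l => p (s l)); split=> // l; split.
have Fs l : F j (p (s l)) by rewrite -GF; split.
have [e e0 nE] := facet_out_form a'0 Kac' s_indep Fs sac'.
by exists j; rewrite nE mulr_gt0.
Qed.

Lemma K_ray y z t : (forall j, dotp (nout j) y <= 0) -> K z -> 0 <= t -> K (z + t *: y).
Proof.
move=> ny Kz t0; apply: contrapT => /out_form_gt0 [j]; apply/negP; rewrite -leNgt.
rewrite dotpDr dotpZr addrAC.
by have := lerD (out_form_le0 j Kz) (mulr_ge0_le0 t0 (ny j)); rewrite addr0.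
Qed.

(* Otherwise Farkas' lemma yields a direction [y] along which every ray from
   [K] stays in [K], contradicting boundedness. *)
Lemma neg_nout_cone j : cone (fun i => nout (lift j i)) (- nout j).
Proof.
apply: contrapT => /farkas [y [yn yj]].
have ny i : dotp (nout i) y <= 0.
  rewrite dotpC; case: (unliftP j i) => [i'|] ->; first exact: yn.
  by move: yj; rewrite dotpNr oppr_gt0 => /ltW.
have y0 : y != 0 by apply: contraTneq yj => ->; rewrite dotp0l ltxx.
have [B KB] := polytope_bounded y polyK.
have [q [_ Kq]] := fdK; set z := q ord0.
pose t := (`|B| + `|dotp y z| + 1) / dotp y y.
have t0 : 0 <= t.
  apply: divr_ge0; last exact: ltW (dotpp_gt0 y0).
  by rewrite -addrA addr_ge0 ?addr_ge0.
have := KB _ (K_ray ny (Kq ord0) t0).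
rewrite dotpDr dotpZr /t divfK ?gt_eqF ?dotpp_gt0 // -/z.
by have := ler_norm B; have := ler_norm (- dotp y z); rewrite normrN; lra.
Qed.

Lemma row_free_nout (s : 'I_d -> 'I_N.+1) :
  injective s -> row_free (\matrix_l nout (s l)).
Proof.
move=> s_inj; apply/inj_row_free => u; rewrite mulmx_sum_row => uA.
pose u' := \row_l (u 0 l * orient (s l)).
have : u' *m \matrix_(k < d, i < d) n (s k) 0 i = 0.
  rewrite mulmx_sum_row -[RHS]uA; apply: eq_bigr => l _.
  by rewrite !rowK mxE /nout scalerA; congr (_ *: _); apply/rowP => i; rewrite !mxE.
move/eqP; rewrite (mulmx_free_eq0 _ (gp s_inj)) => /eqP/rowP u'0; apply/rowP => l.
have := u'0 l; rewrite !mxE => /eqP.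
by rewrite mulf_eq0 (negbTE (orient_neq0 _)) orbF => /eqP.
Qed.

Hypothesis dN : (d <= N)%N.

Lemma free_on_nout (U : {set 'I_N.+1}) : (#|U| <= d)%N -> free_on nout U.
Proof.
move=> Ud; have [V UV Vd] : exists2 V : {set _}, U \subset V & #|V| = d.
  by apply: exists_superset; rewrite Ud card_ord leqW.
have [s s_inj Vs] := enum_ord Vd.
apply: (free_onS (V := V)); first exact/fintype.subsetP.
exact: row_free_free_on s_inj Vs (row_free_nout s_inj).
Qed.

Definition pos_dep (J : {set 'I_N.+1}) := exists kap : 'I_N.+1 -> R,
  [/\ forall i, i \in J -> 0 < kap i, forall i, i \notin J -> kap i = 0
    & \sum_i kap i *: nout i = 0].

Lemma pos_dep_through j : exists J : {set _}, [/\ j \in J, #|J| = d.+1 & pos_dep J].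
Proof.
have [mu [mu0 muE T_card]] := caratheodory (neg_nout_cone j).
set T := [set i | mu i != 0]%SET in T_card.
pose J := (j |: [set lift j i | i in T])%SET.
pose kap i := if unlift j i is Some i' then mu i' else 1.
have J_card : #|J| = #|T|.+1.
  rewrite cardsU1 card_imset; last exact: lift_inj.
  by case: imsetP => // -[i _ ji]; move: (neq_lift j i); rewrite -ji eqxx.
have kap_out i : i \notin J -> kap i = 0.
  rewrite /J !inE negb_or /kap => /andP[ij iT]; case: (unliftP j i) ij iT => [i' ->|->].
    move=> _ /imsetP no_i; apply: contrapT => /eqP mui.
    by apply: no_i; exists i'; rewrite ?inE.
  by rewrite eqxx.
have kap_sum : \sum_i kap i *: nout i = 0.
  rewrite (bigD1_ord j) //= /kap unlift_none scale1r.
  by under eq_bigr do rewrite liftK; rewrite -muE addrN.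
have T_d : #|T| = d.
  apply/eqP; rewrite eqn_leq T_card leqNgt; apply/negP => Td.
  have /free_on_nout J_free : (#|J| <= d)%N by rewrite J_card.
  have := J_free kap kap_out kap_sum j.
  by rewrite /kap unlift_none => /eqP; rewrite oner_eq0.
exists J; split; [by rewrite !inE eqxx | by rewrite J_card T_d | exists kap; split=> //].
move=> i; rewrite /kap !inE; case: (unliftP j i) => [i' ->|-> //].
rewrite eq_sym (negbTE (neq_lift _ _)) /= => /imsetP[i'' i''T /lift_inj ii''].
by move: i''T; rewrite -ii'' inE lt_def => ->; rewrite mu0.
Qed.

Definition cell (J : {set 'I_N.+1}) : set 'rV[R]_d :=
  [set x | forall j, j \in J -> dotp (nout j) x + bout j <= 0].

Lemma cell_halfspaces (J : {set 'I_N.+1}) (s : 'I_d.+1 -> 'I_N.+1) :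
  J =i codom s -> cell J = halfspaces (fun k => nout (s k)) (fun k => bout (s k)).
Proof.
move=> Js; apply/seteqP; split=> x Jx => [k|j]; first by apply: Jx; rewrite Js codom_f.
by rewrite Js => /codomP[k ->]; apply: Jx.
Qed.

(* The offset is negative because [K], which lies in the cell, has interior. *)
Lemma cell_offset_lt0 (s : 'I_d.+1 -> 'I_N.+1) (lam : 'I_d.+1 -> R) :
  (forall k, 0 < lam k) -> \sum_k lam k *: nout (s k) = 0 ->
  \sum_k lam k * bout (s k) < 0.
Proof.
move=> lam_gt0 lam_a; have [q [q_indep Kq]] := fdK.
have CE z := sum_lam_form (fun k => bout (s k)) lam_a z.
have terms_le0 i k : lam k * (dotp (nout (s k)) (q i) + bout (s k)) <= 0.
  exact: mulr_ge0_le0 (ltW (lam_gt0 k)) (out_form_le0 _ (Kq i)).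
have C_le0 : \sum_k lam k * bout (s k) <= 0.
  by rewrite -(CE (q ord0)); apply: sumr_le0 => k _; apply: terms_le0.
rewrite lt_neqAle C_le0 andbT; apply/eqP => C0; move/eqP: (nout_neq0 (s ord0)); apply.
apply: (aff_indep_form_eq0 (c := bout (s ord0)) q_indep) => i.
have := sumr_le0_eq0 (terms_le0 i) (etrans (CE (q i)) C0) ord0.
by move/eqP; rewrite mulf_eq0 (gt_eqF (lam_gt0 _)) => /eqP.
Qed.

Lemma cell_simplex (J : {set 'I_N.+1}) : #|J| = d.+1 -> pos_dep J ->
  simplex (cell J) /\ forall G, facet (cell J) G -> exists j, F j `<=` G.
Proof.
move=> Jd [kap [kap_pos kap_out kap_sum]]; have [s s_inj Js] := enum_ord Jd.
have lam_gt0 k : 0 < kap (s k) by apply: kap_pos; rewrite Js codom_f.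
have lam_a : \sum_k kap (s k) *: nout (s k) = 0.
  rewrite -(sum_codom (F := fun i => kap i *: nout i) s_inj) // => i.
  by rewrite -Js => /kap_out->; rewrite scale0r.
have a_free k : row_free (\matrix_l nout (s (lift k l))).
  by apply: row_free_nout => l1 l2 /s_inj/lift_inj.
have lam_c := cell_offset_lt0 lam_gt0 lam_a.
rewrite (cell_halfspaces Js); split.
  exact: simplex_halfspaces lam_gt0 lam_a lam_c a_free.
move=> G /(halfspaces_facet lam_gt0 lam_a lam_c a_free) [k kG].
exists (s k) => x Fx; apply: kG; split; last by rewrite out_formE (Fn Fx) mulr0.
by move=> k'; apply: out_form_le0; apply: facet_sub Fx.
Qed.

End FacetNormals.

Theorem theorem3p8 (R : realType) (d N : nat) (K : set 'rV[R]_d)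
  (F : 'I_N.+1 -> set 'rV[R]_d) (n : 'I_N.+1 -> 'rV[R]_d) (b : 'I_N.+1 -> R) :
  (d <= N)%N ->
  polytope K -> full_dim K ->
  injective F -> (forall j, facet K (F j)) ->
  (forall G, facet K G -> exists j, G = F j) ->
  (forall j, n j != 0) ->
  (forall j, F j `<=` [set x | dotp (n j) x + b j = 0]) ->
  (forall s : 'I_d -> 'I_N.+1, injective s ->
     row_free (\matrix_(k < d, i < d) n (s k) 0 i)) ->
  exists (M : nat) (S : 'I_M -> set 'rV[R]_d),
    (M <= 'C(N.+1, d.+1))%N /\
    (forall k, simplex (S k)) /\
    K = [set x | forall k, S k x] /\
    (forall k G, facet (S k) G -> exists j, F j `<=` G).
Proof.
move=> dN polyK fdK _ facF allF n0 Fn gp.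
pose good := [set J : {set 'I_N.+1} | (#|J| == d.+1) && `[< pos_dep K n b J >]]%SET.
have good_cell (k : 'I_#|good|) : simplex (cell K n b (enum_val k)) /\
    forall G, facet (cell K n b (enum_val k)) G -> exists j, F j `<=` G.
  have := enum_valP k; rewrite inE => /andP[/eqP Jd /asboolP J_dep].
  by have := cell_simplex fdK facF n0 Fn gp Jd J_dep.
exists #|good|, (fun k => cell K n b (enum_val k)); split.
  have <- : #|[set J : {set 'I_N.+1} | #|J| == d.+1]%SET| = 'C(N.+1, d.+1).
    by rewrite card_draws card_ord.
  by apply/subset_leq_card/fintype.subsetP => J; rewrite !inE => /andP[].
split; first by move=> k; case: (good_cell k).
split; last by move=> k; case: (good_cell k).
apply/seteqP; split=> x; first by move=> Kx k j _; exact: (out_form_le0 facF n0 Fn j Kx).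
move=> /= x_cells; apply: contrapT => /(out_form_gt0 polyK fdK facF allF n0 Fn) [j xj].
have [J [jJ Jd J_dep]] := pos_dep_through polyK fdK facF allF n0 Fn gp dN j.
have Jgood : J \in good by rewrite !inE Jd eqxx; apply/asboolP.
have := x_cells (enum_rank_in Jgood J) j; rewrite enum_rankK_in // => /(_ jJ).
by rewrite leNgt xj.
Qed.
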